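(* Let $G=(V,E)$ be a simple planar bipartite undirected graph whose edges are each colored Red or Blue, and let $M$ be a perfect matching of $G$ containing an odd number of Red edges. Define the weighted directed graph $H$ on vertex set $V$ as follows: $(u,v)$ is an edge of $H$ if and only if there is $x\in V$ with $\{u,x\}\in M$ and $\{x,v\}\in E\setminus M$; its weight $w(u,v)$ is $0$ if $\{u,x\}$ and $\{x,v\}$ have the same color and $1$ otherwise. Then $G$ has a perfect matching containing an even number of Red edges if and only if $H$ contains a directed cycle of odd total weight.
   Context: A perfect matching is a set of pairwise vertex-disjoint edges covering every vertex. The weight of a directed cycle is the sum of the weights of its edges. (Since $M$ is perfect, for each $u$ the vertex $x$ with $\{u,x\}\in M$ is unique.) *)

From HB Require Import structures.
From Stdlib Require Import Reals.
From mathcomp Require Import all_boot.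

Set Implicit Arguments.
Unset Strict Implicit.
Unset Printing Implicit Defensive.

Definition simple_graph (V : finType) (E : {set {set V}}) : Prop :=
  forall f, f \in E -> #|f| = 2.

Definition bipartite (V : finType) (E : {set {set V}}) : Prop :=
  exists side : V -> bool,
    forall u v, [set u; v] \in E -> side u != side v.

Definition perfect_matching (V : finType) (E M : {set {set V}}) : Prop :=
  M \subset E /\ forall v : V, #|[set f in M | v \in f]| = 1.

Definition in01 (t : R) : Prop := Rle R0 t /\ Rle t R1.
Definition open01 (t : R) : Prop := Rlt R0 t /\ Rlt t R1.

Definition pdist (p q : R * R) : R :=
  Rmax (Rabs (Rminus (fst p) (fst q))) (Rabs (Rminus (snd p) (snd q))).

Definition cont01 (g : R -> R * R) : Prop :=
  forall t, in01 t -> forall eps, Rlt R0 eps ->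
    exists delta, Rlt R0 delta /\
      forall s, in01 s -> Rlt (Rabs (Rminus s t)) delta ->
        Rlt (pdist (g s) (g t)) eps.

Definition planar (V : finType) (E : {set {set V}}) : Prop :=
  exists (pos : V -> R * R) (crv : V -> V -> R -> R * R),
    injective pos /\
    (forall u v, [set u; v] \in E ->
       [/\ cont01 (crv u v), crv u v R0 = pos u, crv u v R1 = pos v &
           (forall t s, in01 t -> in01 s -> crv u v t = crv u v s -> t = s)] /\
       (forall t, in01 t -> crv v u t = crv u v (Rminus R1 t)) /\
       (forall t w, open01 t -> crv u v t <> pos w)) /\
    (forall u v u' v', [set u; v] \in E -> [set u'; v'] \in E ->
       [set u; v] != [set u'; v'] ->
       forall t s, open01 t -> open01 s -> crv u v t <> crv u' v' s).

Definition Hedge (V : finType) (E M : {set {set V}}) : rel V :=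
  fun u v => [exists x, ([set u; x] \in M) && ([set x; v] \in E :\: M)].

(* weight: 0 if {u,x} and {x,v} have the same colour, 1 otherwise
   (red = set of Red edges, all other edges are Blue).  Since M is a perfect
   matching, x is the unique M-partner of u, so this is well defined. *)
Definition Hweight (V : finType) (E M red : {set {set V}}) (u v : V) : nat :=
  if [exists x, [&& [set u; x] \in M, [set x; v] \in E :\: M &
                    ([set u; x] \in red) != ([set x; v] \in red)]]
  then 1 else 0.

Definition dicycle (V : finType) (h : rel V) (c : seq V) : Prop :=
  [/\ c != [::], uniq c & cycle h c].

Definition cycle_weight (V : finType) (w : V -> V -> nat) (c : seq V) : nat :=
  sumn [seq w p.1 p.2 | p <- zip c (rot 1 c)].

From mathcomp Require Import all_boot.

Set Implicit Arguments.
Unset Strict Implicit.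
Unset Printing Implicit Defensive.

(* Let p be the partner map of M, so that u -> v is an arc of H exactly when
   {p u, v} is an edge outside M, and its weight is, modulo 2, the number of
   red edges among {u, p u} and {p u, v}.  Given another perfect matching M'
   with partner map p', the map f = p' \o p permutes each class of the
   bipartition, and u -> f u is an arc of H unless f u = u.  Summing these
   weights over one class counts every red edge of M and of M' once, so the sum
   is |M :&: red| + |M' :&: red| modulo 2; if M' is even, some cycle of f has
   odd weight.  Conversely, arcs of H stay inside one class, so a directed
   cycle c of H is disjoint from its image under p, and trading the edges
   {u, p u} of M for the edges {p u, next c u} along c gives a perfect matching
   whose red count differs from that of M by the weight of c modulo 2. *)

Lemma odd_sum (I : Type) (r : seq I) (P : pred I) (F : I -> nat) :
  odd (\sum_(i <- r | P i) F i) = \big[addb/false]_(i <- r | P i) odd (F i).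
Proof. exact: (big_morph odd oddD). Qed.

Definition partner_map (V : finType) (N : {set {set V}}) (p : V -> V) : Prop :=
  forall w x, ([set w; x] \in N) = (x == p w).

Definition matching_of (V : finType) (q : V -> V) : {set {set V}} :=
  [set [set w; q w] | w : V].

Lemma partner_involutive (V : finType) (N : {set {set V}}) (p : V -> V) :
  partner_map N p -> involutive p.
Proof. by move=> Np w; apply/esym/eqP; rewrite -Np setUC Np eqxx. Qed.

Lemma partner_edge (V : finType) (E N : {set {set V}}) (p : V -> V) :
  N \subset E -> partner_map N p -> forall w, [set w; p w] \in E.
Proof. by move=> sNE Np w; rewrite (subsetP sNE) ?Np. Qed.

Lemma card_matching_ofI (V : finType) (A : {set {set V}}) (q : V -> V)
    (side : V -> bool) (b : bool) :
  involutive q -> (forall w, side (q w) != side w) ->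
  #|matching_of q :&: A| = \sum_(x | side x == b) ([set x; q x] \in A : nat).
Proof.
move=> qK q_side; pose S := [set x | (side x == b) && ([set x; q x] \in A)].
have -> : \sum_(x | side x == b) ([set x; q x] \in A : nat) = #|S|.
  rewrite -sum1_card big_mkcond [RHS]big_mkcond; apply: eq_bigr => x _.
  by rewrite inE; case: (side x == b); case: (_ \in A).
have inj_S : {in S &, injective (fun x => [set x; q x])}.
  move=> x y; rewrite !inE => /andP[/eqP sx _] /andP[/eqP sy _] exy.
  have : x \in [set y; q y] by rewrite -exy set21.
  by case/set2P => // x_qy; move: (q_side y); rewrite -x_qy sx sy eqxx.
rewrite -(card_in_imset inj_S); apply: eq_card => f; rewrite inE.
apply/andP/imsetP => [[/imsetP[w _ ->] wA] | [x]]; last first.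
  by rewrite inE => /andP[_ xA] ->; split=> //; apply/imsetP; exists x.
have [sw | sw] := eqVneq (side w) b; first by exists w; rewrite // inE sw eqxx.
exists (q w); last by rewrite qK setUC.
rewrite inE qK setUC wA andbT; move: (q_side w) sw.
by case: (side (q w)); case: (side w); case: (b).
Qed.

Section PerfectMatching.
Variables (V : finType) (E : {set {set V}}).
Hypothesis simpleE : simple_graph E.

Lemma edge_neq w x : [set w; x] \in E -> w != x.
Proof. by move=> /simpleE; case: (w =P x) => // ->; rewrite setUid cards1. Qed.

Lemma perfect_matching_partner (N : {set {set V}}) :
  perfect_matching E N -> exists p : V -> V, partner_map N p.
Proof.
move=> [sNE cardN].
have N_at w : exists2 x, [set w; x] \in N & forall y, [set w; y] \in N -> y = x.
  have /eqP/cards1P[f Nw] := cardN w.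
  have : f \in [set f in N | w \in f] by rewrite Nw set11.
  rewrite inE => /andP[fN wf].
  have /eqP/cards2P[a [b [_ def_f]]] := simpleE (subsetP sNE _ fN).
  have {def_f} [x def_f] : exists x, f = [set w; x].
    by rewrite def_f in wf *; case/set2P: wf => ->; [exists b | exists a; rewrite setUC].
  exists x => [|y Nwy]; first by rewrite -def_f.
  have : [set w; y] \in [set f in N | w \in f] by rewrite inE Nwy set21.
  rewrite Nw def_f inE => /eqP wy_wx.
  have : y \in [set w; x] by rewrite -wy_wx set22.
  case/set2P => // yw; have := edge_neq (subsetP sNE _ Nwy).
  by rewrite yw eqxx.
exists (fun w => odflt w [pick x | [set w; x] \in N]) => w x.
have [y Nwy uniq_y] := N_at w.
case: pickP => [z /uniq_y -> | /(_ y)/idP//] /=.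
by apply/idP/eqP => [/uniq_y | ->].
Qed.

Lemma matching_of_partner (N : {set {set V}}) (p : V -> V) :
  N \subset E -> partner_map N p -> N = matching_of p.
Proof.
move=> sNE Np; apply/setP => f; apply/idP/imsetP => [fN | [w _ ->]]; last first.
  by rewrite Np.
have /eqP/cards2P[a [b [_ def_f]]] := simpleE (subsetP sNE _ fN).
by exists a => //; rewrite def_f; congr [set _; _]; apply/eqP; rewrite -Np -def_f.
Qed.

Lemma perfect_matching_of (q : V -> V) :
  involutive q -> (forall w, [set w; q w] \in E) ->
  perfect_matching E (matching_of q).
Proof.
move=> qK qE; split; first by apply/subsetP => _ /imsetP[w _ ->].
move=> v; apply/eqP/cards1P; exists [set v; q v]; apply/setP => f; rewrite !inE.
apply/andP/eqP => [[/imsetP[w _ ->] /set2P[->|->]] // | ->].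
  by rewrite qK setUC.
by split; [apply/imsetP; exists v | rewrite set21].
Qed.

End PerfectMatching.

Lemma cycle_weight_fcycle (V : finType) (f : V -> V) (w : V -> V -> nat) c :
  fcycle f c -> cycle_weight w c = \sum_(y <- c) w y (f y).
Proof.
move=> cyc; rewrite /cycle_weight sumnE big_map.
suff -> : zip c (rot 1 c) = [seq (y, f y) | y <- c] by rewrite big_map.
case: c cyc => // x s; rewrite rot1_cons /=; move: {2 4}x => y.
elim: s x => [|z s IHs] x /=; first by rewrite andbT => /eqP ->.
by case/andP => /eqP <- /IHs ->.
Qed.

Lemma orbit_sub (T : finType) (f : T -> T) (S : {pred T}) x :
  {homo f : y / y \in S} -> x \in S -> {subset orbit f x <= S}.
Proof.
move=> fS xS y; rewrite -fconnect_orbit => /iter_findex <-.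
by elim: (findex f x y) => //= n; apply: fS.
Qed.

Lemma odd_sum_orbit (T : finType) (f : T -> T) (g : T -> nat) (S : {set T}) :
  injective f -> {homo f : x / x \in S} -> odd (\sum_(x in S) g x) ->
  exists2 x, x \in S & odd (\sum_(y <- orbit f x) g y).
Proof.
move=> injf; elim: {S}_.+1 {-2}S (ltnSn #|S|) => // n IHn S leSn fS oddS.
have [x xS] : exists x, x \in S.
  by apply/set0Pn; apply: contraTneq oddS => ->; rewrite big_set0.
have orbS := orbit_sub fS xS.
move: oddS; rewrite (bigID (mem (orbit f x))) oddD /=.
have -> : \sum_(y in S | y \in orbit f x) g y = \sum_(y <- orbit f x) g y.
  rewrite big_uniq ?orbit_uniq //; apply: eq_bigl => y /=.
  by apply/andP/idP => [[] | yx] //; split; first exact: orbS.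
case: (boolP (odd _)) => [oddO _ | _ /= oddR]; first by exists x.
pose R := S :\: [set y in orbit f x].
have [|y /= yR|| y] := IHn R.
- rewrite -ltnS (leq_trans _ leSn) // ltnS; apply: proper_card; apply/properP.
  by split; [apply: subsetDl | exists x; rewrite // !inE in_orbit].
- rewrite !inE in yR *; case/andP: yR => yx /fS ->; rewrite andbT.
  apply: contra yx; rewrite -!fconnect_orbit => /connect_trans; apply.
  by rewrite fconnect_sym // fconnect1.
- by move: oddR; congr (odd _); apply: eq_bigl => y; rewrite !inE andbC.
- by rewrite inE => /andP[_ yS]; exists y.
Qed.

Section Switch.
Variables (V : finType) (p : V -> V) (c : seq V).

(* The partner map of the matching obtained from the one with partner map p
   by exchanging its edges [{u, p u}], u in c, for the edges [{p u, next c u}]. *)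
Definition switch (w : V) : V :=
  if w \in c then p (prev c w) else if p w \in c then next c (p w) else p w.

Variables (side : V -> bool) (s : bool).
Hypotheses (pK : involutive p) (p_side : forall w, side (p w) != side w).
Hypotheses (c_uniq : uniq c) (c_side : {in c, forall u, side u = s}).

Lemma partner_notin_cycle w : w \in c -> p w \notin c.
Proof. by move=> wc; apply: contraNN (p_side w) => /c_side ->; rewrite c_side. Qed.

Lemma switch_involutive : involutive switch.
Proof.
move=> w; have [wc | wNc] := boolP (w \in c).
  have prev_c : prev c w \in c by rewrite mem_prev.
  by rewrite /switch wc (negbTE (partner_notin_cycle prev_c)) pK prev_c next_prev.
have [pwc | pwNc] := boolP (p w \in c).
  by rewrite /switch (negbTE wNc) pwc mem_next pwc prev_next // pK.
by rewrite /switch (negbTE wNc) (negbTE pwNc) pK (negbTE wNc) (negbTE pwNc).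
Qed.

Lemma switch_side w : side (switch w) != side w.
Proof.
rewrite /switch; have [wc | wNc] := boolP (w \in c).
  have prev_c : prev c w \in c by rewrite mem_prev.
  by rewrite (c_side wc) -(c_side prev_c) p_side.
have [pwc | _] := boolP (p w \in c); last exact: p_side.
by rewrite c_side ?mem_next // -(c_side pwc) p_side.
Qed.

Lemma card_switchI (A : {set {set V}}) :
  #|matching_of switch :&: A| + \sum_(u <- c) ([set u; p u] \in A : nat) =
  #|matching_of p :&: A| + \sum_(u <- c) ([set p u; next c u] \in A : nat).
Proof.
have notin_c x : side x == ~~ s -> x \notin c.
  by apply: contraL => /c_side ->; case: (s).
have sum_c F : \sum_(x | (side x == ~~ s) && (p x \in c)) F x =
               \sum_(u <- c) F (p u).
  rewrite (reindex p) /=; last by apply: onW_bij; exists p.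
  rewrite big_uniq //; apply: eq_bigl => u; rewrite pK.
  apply/andP/idP => [[] // | uc]; split=> //; rewrite -(c_side uc).
  by move: (p_side u); case: (side (p u)); case: (side u).
rewrite (card_matching_ofI A (~~ s) switch_involutive switch_side).
rewrite (card_matching_ofI A (~~ s) pK p_side).
rewrite (bigID (fun x => p x \in c)) [in RHS](bigID (fun x => p x \in c)) /= !sum_c.
have -> : \sum_(x | (side x == ~~ s) && (p x \notin c)) ([set x; switch x] \in A : nat)
        = \sum_(x | (side x == ~~ s) && (p x \notin c)) ([set x; p x] \in A : nat).
  apply: eq_bigr => x /andP[/notin_c xNc pxNc].
  by rewrite /switch (negbTE xNc) (negbTE pxNc).
have -> : \sum_(u <- c) ([set p u; switch (p u)] \in A : nat) =
          \sum_(u <- c) ([set p u; next c u] \in A : nat).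
  apply: eq_big_seq => u uc; rewrite /switch pK.
  by rewrite (negbTE (partner_notin_cycle uc)) uc.
have -> : \sum_(u <- c) ([set p u; p (p u)] \in A : nat) =
          \sum_(u <- c) ([set u; p u] \in A : nat).
  by apply: eq_bigr => u _; rewrite pK setUC.
by rewrite addnAC [in RHS]addnAC (addnC (\sum_(u <- c) _)).
Qed.

End Switch.

Section AuxiliaryDigraph.
Variables (V : finType) (E M red : {set {set V}}) (p : V -> V) (side : V -> bool).
Hypotheses (simpleE : simple_graph E) (sME : M \subset E) (Mp : partner_map M p).
Hypothesis side_edge : forall u v, [set u; v] \in E -> side u != side v.

Lemma partner_side (N : {set {set V}}) (q : V -> V) :
  N \subset E -> partner_map N q -> forall u, side (q u) != side u.
Proof. by move=> sNE Nq u; rewrite eq_sym side_edge ?(partner_edge sNE Nq). Qed.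

Lemma card_partnerI (N : {set {set V}}) (q : V -> V) (b : bool) :
  N \subset E -> partner_map N q ->
  #|N :&: red| = \sum_(x | side x == b) ([set x; q x] \in red : nat).
Proof.
move=> sNE Nq; rewrite (matching_of_partner simpleE sNE Nq).
exact: card_matching_ofI (partner_involutive Nq) (partner_side sNE Nq).
Qed.

Let pK : involutive p := partner_involutive Mp.
Let p_side : forall u, side (p u) != side u := partner_side sME Mp.

Lemma exists_partnerE (P : pred V) u :
  [exists x, ([set u; x] \in M) && P x] = P (p u).
Proof.
apply/existsP/idP => [[x /andP[]] | Ppu]; first by rewrite Mp => /eqP ->.
by exists (p u); rewrite Mp eqxx.
Qed.

Lemma HedgeE u v : Hedge E M u v = ([set p u; v] \in E) && (v != u).
Proof.
rewrite /Hedge (exists_partnerE (fun x => [set x; v] \in E :\: M)).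
by rewrite !inE Mp pK andbC.
Qed.

Lemma HweightE u v : Hweight E M red u v =
  Hedge E M u v && (([set u; p u] \in red) != ([set p u; v] \in red)).
Proof.
rewrite /Hweight /Hedge !(exists_partnerE (fun x => [set x; v] \in E :\: M)).
by rewrite (exists_partnerE (fun x => [&& [set x; v] \in E :\: M &
                                 ([set u; x] \in red) != ([set x; v] \in red)])).
Qed.

Lemma Hweight_id u : Hweight E M red u u = 0.
Proof. by rewrite HweightE HedgeE eqxx andbF. Qed.

Lemma odd_Hweight u v : [set p u; v] \in E ->
  odd (Hweight E M red u v) = ([set u; p u] \in red) (+) ([set p u; v] \in red).
Proof.
move=> puvE; rewrite HweightE HedgeE puvE /=.
have [-> | _] := eqVneq v u; first by rewrite [[set p u; u]]setUC addbb.
by case: ([set u; p u] \in red); case: ([set p u; v] \in red).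
Qed.

Lemma odd_sum_Hweight (r : seq V) (P : pred V) (h : V -> V) :
  (forall u, P u -> [set p u; h u] \in E) ->
  odd (\sum_(u <- r | P u) Hweight E M red u (h u)) =
    odd (\sum_(u <- r | P u) ([set u; p u] \in red : nat)) (+)
    odd (\sum_(u <- r | P u) ([set p u; h u] \in red : nat)).
Proof.
move=> hE; rewrite !odd_sum -big_split /=.
by apply: eq_bigr => u Pu; rewrite odd_Hweight ?hE // !oddb.
Qed.

Lemma Hedge_side u v : Hedge E M u v -> side u == side v.
Proof.
rewrite HedgeE => /andP[/side_edge puv _].
by move: (p_side u) puv; case: (side u); case: (side v); case: (side (p u)).
Qed.

Lemma switch_edge c w : cycle (Hedge E M) c -> [set w; switch p c w] \in E.
Proof.
move=> c_cycle; rewrite /switch; case: ifP => [wc | _].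
  by move: (prev_cycle c_cycle wc); rewrite HedgeE setUC => /andP[].
case: ifP => [pwc | _]; last exact: partner_edge sME Mp w.
by move: (next_cycle c_cycle pwc); rewrite HedgeE pK => /andP[].
Qed.

Lemma odd_cycle_of_even_matching (M' : {set {set V}}) :
  perfect_matching E M' -> odd #|M :&: red| -> ~~ odd #|M' :&: red| ->
  exists c, dicycle (Hedge E M) c /\ odd (cycle_weight (Hweight E M red) c).
Proof.
move=> pmM' oddM evenM'; have [sM'E _] := pmM'.
have [p' M'p'] := perfect_matching_partner simpleE pmM'.
have p'K := partner_involutive M'p'.
have M'E := partner_edge sM'E M'p'.
pose f u := p' (p u).
have inj_f : injective f by apply: inj_comp; apply: can_inj.
have f_side u : side (f u) = side u.
  move: (partner_side sM'E M'p' (p u)) (p_side u).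
  by rewrite /f; do 3!case: (side _).
pose S := [set u | (side u == false) && (f u != u)].
have fS u : u \in S -> f u \in S.
  by rewrite !inE f_side => /andP[-> fu] /=; apply: contraNneq fu => /inj_f ->.
have oddS : odd (\sum_(u in S) Hweight E M red u (f u)).
  have -> : \sum_(u in S) Hweight E M red u (f u) =
            \sum_(u | side u == false) Hweight E M red u (f u).
    rewrite [RHS](bigID (fun u => f u != u)) /= [X in _ + X]big1 ?addn0.
      by apply: eq_bigl => u; rewrite inE.
    by move=> u /andP[_]; rewrite negbK => /eqP fu; rewrite fu Hweight_id.
  rewrite odd_sum_Hweight => [|u _]; last exact: M'E.
  rewrite -(card_partnerI false sME Mp) oddM.
  suff -> : \sum_(u | side u == false) ([set p u; f u] \in red : nat) =
            #|M' :&: red| by rewrite (negbTE evenM').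
  rewrite (card_partnerI true sM'E M'p') [RHS](reindex p) /=.
    by apply: eq_bigl => u; move: (p_side u); case: (side u); case: (side (p u)).
  by apply: onW_bij; exists p.
have [u uS odd_u] := odd_sum_orbit inj_f fS oddS.
have orbS := orbit_sub fS uS.
exists (orbit f u); split.
  split; [by apply: contraTneq (in_orbit f u) => -> | exact: orbit_uniq |].
  apply: (sub_in_cycle (P := [pred x | x \in S]) _ _ (cycle_orbit inj_f u)).
    move=> x y; rewrite !inE => /andP[_ fx] _ /eqP <-.
    by rewrite HedgeE M'E.
  by apply/allP.
by rewrite (cycle_weight_fcycle _ (cycle_orbit inj_f u)).
Qed.

Lemma even_matching_of_odd_cycle c :
  dicycle (Hedge E M) c -> odd (cycle_weight (Hweight E M red) c) ->
  odd #|M :&: red| -> exists M', perfect_matching E M' /\ ~~ odd #|M' :&: red|.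
Proof.
case=> c_nil c_uniq c_cycle oddw oddM.
have [x0 x0c] : exists x0, x0 \in c.
  by case: (c) c_nil => // x s _; exists x; rewrite mem_head.
have c_side : {in c, forall u, side u = side x0}.
  have : all2rel [rel u v | side u == side v] c.
    rewrite -cycle_all2rel; last by move=> y x z /= /eqP -> /eqP ->.
    by apply: (sub_cycle _ c_cycle) => u v /Hedge_side.
  by move=> /allrelP c_side u uc; apply/eqP; apply: c_side.
have qK := switch_involutive pK p_side c_uniq c_side.
exists (matching_of (switch p c)); split.
  by apply: perfect_matching_of qK _ => w; apply: switch_edge.
have := card_switchI pK p_side c_uniq c_side red.
rewrite -(matching_of_partner simpleE sME Mp) => /(congr1 odd).
move: oddw; rewrite (cycle_weight_fcycle _ (cycle_next c_uniq)) big_seq.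
rewrite odd_sum_Hweight => [|u uc]; last first.
  by have := next_cycle c_cycle uc; rewrite HedgeE => /andP[].
rewrite -!big_seq !oddD oddM.
by do 3!case: (odd _).
Qed.

End AuxiliaryDigraph.

Theorem mainTheorem13 (V : finType) (E M red : {set {set V}}) :
  simple_graph E -> planar E -> bipartite E ->
  perfect_matching E M -> odd #|M :&: red| ->
  ((exists M' : {set {set V}}, perfect_matching E M' /\ ~~ odd #|M' :&: red|)
   <->
   (exists c : seq V, dicycle (Hedge E M) c /\
                      odd (cycle_weight (Hweight E M red) c))).
Proof.
move=> simpleE _ [side side_edge] pmM oddM.
have [p Mp] := perfect_matching_partner simpleE pmM.
split=> [[M' [pmM' evenM']] | [c [dc oddw]]].
- exact: (odd_cycle_of_even_matching simpleE pmM.1 Mp side_edge pmM' oddM evenM').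
- exact: (even_matching_of_odd_cycle simpleE pmM.1 Mp side_edge dc oddw oddM).
Qed.
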